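(* Let $W=\langle s,t: s^2=t^2=(st)^m=1\rangle$ be a Coxeter group of rank $2$ with $S=\{s,t\}$, $m\ge2$ the order of $st$, and $w_0$ its longest element. Then the right $W$-module $e_S\mathbb CW$ affords the character $\Phi_S=\operatorname{Ind}_{\langle w_0\rangle}^W(1)-1_S$.
   Context: $1_S$ is the trivial character of $W$. For $J\subseteq S$: $X_J=\{w\in W:\ell(rw)>\ell(w)\ \forall r\in J\}$, $x_J=\sum_{x\in X_J}x^{-1}$, $X_J^\sharp=\{x\in X_J:x^{-1}Jx\subseteq S\}$; $m_{KL}=|X_K\cap X_L^\sharp|$ if $L\subseteq K$ and $0$ otherwise; the elements $e_L$ are defined by $x_K=\sum_{L\subseteq S}m_{KL}e_L$ for all $K\subseteq S$. *)

From HB Require Import structures.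
From mathcomp Require Import all_boot all_order all_algebra all_fingroup all_solvable all_field all_character.
Set Implicit Arguments. Unset Strict Implicit. Unset Printing Implicit Defensive.
Import GRing.Theory Num.Theory.
Local Open Scope ring_scope.
Local Open Scope group_scope.

Section Coxeter.
Variables (gT : finGroupType) (S : {set gT}).

Fixpoint words (n : nat) : {set gT} :=
  if n is n'.+1 then [set x * y | x in words n', y in S] else [set 1].

(* word length w.r.t. S: least n with w a product of n generators
   (lengths in a finite group generated by S are < #|gT|) *)
Definition ell (w : gT) : nat := find (fun n => w \in words n) (iota 0 #|gT|).

Definition Xset (J : {set gT}) : {set gT} :=
  [set w | [forall r in J, ell w < ell (r * w)]%N].

Definition Xsharp (J : {set gT}) : {set gT} :=
  [set x in Xset J | (J :^ x) \subset S].

Definition mcoef (K L : {set gT}) : nat :=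
  if L \subset K then #|Xset K :&: Xsharp L| else 0%N.

End Coxeter.

(* The complex group algebra CW, elements are functions W -> C *)
Definition CW (gT : finGroupType) := {ffun gT -> algC^o}.

Section GroupAlgebra.
Variable gT : finGroupType.

Definition gdelta (g : gT) : CW gT := [ffun x => if x == g then 1%R else 0%R].

Definition gmul (a b : CW gT) : CW gT :=
  [ffun z => (\sum_(x : gT) a x * b ((x^-1 * z)%g))%R].

Definition xsum (S J : {set gT}) : CW gT :=
  (\sum_(x in Xset S J) gdelta (x^-1)%g)%R.

Definition rideal (e : CW gT) : {vspace CW gT} :=
  <<[seq gmul e (gdelta g) | g : gT]>>%VS.

(* character of the right W-module U (U stable under right multiplication):
   trace of v |-> v * g on U *)
Definition rchar (U : {vspace CW gT}) (g : gT) : algC :=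
  (\sum_(i < \dim U) coord (vbasis U) i (gmul (vbasis U)`_i (gdelta g)))%R.

End GroupAlgebra.

(* In the dihedral group W of order 2m generated by the involutions s and t,
   the triangular system x_K = sum_L m_KL e_L is solved one K at a time:
   K = {} gives e_{} = |W|^-1 sum_w w; K = {r} uses |X_r| = |W|/2 and
   |X_r :&: X_r^#| = 2 (the x with s^x in S form a set of size 4, stable under
   left multiplication by s); K = S uses X_S = {1}.  Since X_s and X_t meet in
   1 and cover every element but w0, this yields
   e_S = (1 + w0)/2 - |W|^-1 sum_w w.  This element is idempotent, so the
   trace of right multiplication by g on e_S CW is the class sum
   sum_h e_S(h g^-1 h^-1), which is the value at g of Ind_<w0>^W 1 - 1. *)

From HB Require Import structures.
From mathcomp Require Import all_boot all_order all_algebra all_fingroup all_solvable all_field all_character.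
From mathcomp Require Import zify ring.
Import GRing.Theory Num.Theory.
Set Implicit Arguments. Unset Strict Implicit. Unset Printing Implicit Defensive.

Lemma dvdn_lt_eq0 m n : (n < m)%N -> (m %| n) = (n == 0%N).
Proof. by case: n => [|n] ltnm; rewrite ?dvdn0 ?gtnNdvd. Qed.

Lemma dvdn_lt_double m n : (n < m.*2)%N -> (m %| n) = (n == 0%N) || (n == m).
Proof.
move=> lt_n_2m; have [ltnm|lemn] := ltnP n m; first by rewrite dvdn_lt_eq0; lia.
by rewrite -(subnKC lemn) dvdn_addr // dvdn_lt_eq0; lia.
Qed.

Lemma eq1_mod_lt_double m n : (1 < m)%N -> (n < m.*2)%N ->
  (n == 1 %[mod m]) = (n == 1%N) || (n == m.+1).
Proof.
move=> m_gt1 lt_n_2m; rewrite (modn_small m_gt1).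
have [ltnm|lemn] := ltnP n m; first by rewrite modn_small //; lia.
by rewrite -(subnKC lemn) modnDl modn_small; lia.
Qed.

Lemma card_double_mod_0_1 m : (1 < m)%N ->
  #|[set k : 'I_m | (m %| k.*2) || (k.*2 == 1 %[mod m])]| = 2%N.
Proof.
move=> m_gt1; have m_gt0 : (0 < m)%N by lia.
have uphalf_lt : (uphalf m < m)%N by rewrite uphalf_half; lia.
rewrite (_ : [set k | _] = [set Ordinal m_gt0; Ordinal uphalf_lt]).
  have ne : (0 != uphalf m)%N by rewrite uphalf_half; apply/eqP; lia.
  by rewrite cards2 -val_eqE /= ne.
apply/setP => k; rewrite !inE -!val_eqE /= uphalf_half.
have ltkm := ltn_ord k; have oddm := odd_double_half m.
have oddm_le1 : (odd m <= 1)%N by case: (odd m).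
rewrite dvdn_lt_double ?eq1_mod_lt_double; lia.
Qed.

Lemma card_dvdn_double_or_doubleS m : (1 < m)%N ->
  #|[set k : 'I_m | (m %| k.*2) || (m %| k.*2.+1)]| = 2%N.
Proof.
move=> m_gt1; have m_gt0 : (0 < m)%N by lia.
have half_lt : (m./2 < m)%N by lia.
rewrite (_ : [set k | _] = [set Ordinal m_gt0; Ordinal half_lt]).
  have ne : (0 != m./2)%N by apply/eqP; lia.
  by rewrite cards2 -val_eqE /= ne.
apply/setP => k; rewrite !inE -!val_eqE /=.
have ltkm := ltn_ord k; have oddm := odd_double_half m.
have oddm_le1 : (odd m <= 1)%N by case: (odd m).
rewrite !dvdn_lt_double; lia.
Qed.

Lemma powerset2 (T : finType) (x y : T) :
  powerset [set x; y] = [set set0; [set x]; [set y]; [set x; y]].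
Proof.
apply/setP => L; rewrite powersetE !inE; apply/idP/idP; last first.
  by rewrite -!orbA => /or4P[] /eqP->; rewrite ?sub0set ?sub1set ?subxx // !inE eqxx ?orbT.
move=> sLxy; rewrite -(setIidPl sLxy) setIUr.
have := subsetIr L [set x]; have := subsetIr L [set y]; rewrite !subset1.
by case/orP=> /eqP-> /orP[]/eqP->; rewrite ?setU0 ?set0U ?eqxx ?orbT.
Qed.

Lemma big_powerset2 (T : finType) (R : nmodType) (x y : T) (F : {set T} -> R) :
  x != y ->
  (\sum_(L in powerset [set x; y]) F L)%R =
    (F set0 + F [set x] + F [set y] + F [set x; y])%R.
Proof.
move=> neq_xy; have neq_card (A B : {set T}) : #|A| != #|B| -> A != B.
  by apply: contraNneq => ->.
rewrite powerset2 -!setUA !big_setU1 ?big_set1 //=.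
all: rewrite ?addrA ?inE ?negb_or ?(inj_eq set1_inj) ?neq_card.
all: by rewrite ?cards0 ?cards1 ?cards2 ?neq_xy.
Qed.

Section WordLength.
Variables (gT : finGroupType) (S : {set gT}).
Hypothesis S_involutive : {in S, forall r, (r * r = 1)%g}.
Local Open Scope group_scope.

Lemma invg_gen r : r \in S -> r^-1 = r.
Proof. by move=> rS; apply: (mulgI r); rewrite mulgV S_involutive. Qed.

Lemma words0 x : (x \in words S 0) = (x == 1).
Proof. by rewrite inE. Qed.

Lemma words_mulr n y r : y \in words S n -> r \in S -> y * r \in words S n.+1.
Proof. exact: imset2_f. Qed.

Lemma wordsSP n x : x \in words S n.+1 ->
  exists2 y, y \in words S n & exists2 r, r \in S & x = y * r.
Proof. by case/imset2P=> y r yw rS ->; exists y => //; exists r. Qed.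

Lemma words_mull n y r : y \in words S n -> r \in S -> r * y \in words S n.+1.
Proof.
elim: n y => [|n IHn] y yw rS.
  by move: yw; rewrite words0 => /eqP->; rewrite mulg1 -[r]mul1g words_mulr ?words0.
by case/wordsSP: yw => y' y'w [r' r'S ->]; rewrite mulgA words_mulr ?IHn.
Qed.

Lemma words_invg n x : x \in words S n -> x^-1 \in words S n.
Proof.
elim: n x => [|n IHn] x; first by rewrite !words0 => /eqP->; rewrite invg1.
by case/wordsSP=> y /IHn yw [r rS ->]; rewrite invMg invg_gen // words_mull.
Qed.

Lemma wordsS_mullP n x : x \in words S n.+1 ->
  exists2 r, r \in S & r * x \in words S n.
Proof.
move/words_invg/wordsSP=> [y yw [r rS xVE]]; exists r => //.
have -> : x = r * y^-1 by rewrite -[x]invgK xVE invMg (invg_gen rS).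
by rewrite mulgA S_involutive // mul1g words_invg.
Qed.

Hypothesis words_cover : forall w, exists2 n, (n < #|gT|)%N & w \in words S n.

Lemma has_words w : has (fun n => w \in words S n) (iota 0 #|gT|).
Proof. by have [n ltn wn] := words_cover w; apply/hasP; exists n; rewrite ?mem_iota. Qed.

Lemma ell_lt_card w : (ell S w < #|gT|)%N.
Proof. by rewrite -[#|gT|](size_iota 0) -has_find has_words. Qed.

Lemma words_ell w : w \in words S (ell S w).
Proof. by have := nth_find 0 (has_words w); rewrite nth_iota ?ell_lt_card. Qed.

Lemma ell_leq_words n w : w \in words S n -> (ell S w <= n)%N.
Proof.
move=> wn; have [/(leq_trans (ell_lt_card w))/ltnW //|ltn] := leqP #|gT| n.
rewrite leqNgt; apply/negP => /(before_find 0); rewrite nth_iota ?wn //.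
Qed.

Lemma ell_eq0 w : (ell S w == 0%N) = (w == 1).
Proof.
apply/eqP/eqP => [ell0|->]; first by have := words_ell w; rewrite ell0 words0 => /eqP.
by apply/eqP; rewrite -leqn0 ell_leq_words ?words0.
Qed.

Lemma ell_mull r w : r \in S -> (ell S (r * w) <= (ell S w).+1)%N.
Proof. by move=> rS; rewrite ell_leq_words ?words_mull ?words_ell. Qed.

Lemma ell_invg w : ell S w^-1 = ell S w.
Proof.
apply/eqP; rewrite eqn_leq; apply/andP; split; apply: ell_leq_words.
  exact/words_invg/words_ell.
by rewrite -{1}[w]invgK; apply/words_invg/words_ell.
Qed.

Lemma ell_descent w : w != 1 -> exists2 r, r \in S & (ell S (r * w) < ell S w)%N.
Proof.
rewrite -ell_eq0; have := words_ell w; case: (ell S w) => // n.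
by case/wordsS_mullP=> r rS rwn _; exists r; rewrite // ltnS ell_leq_words.
Qed.

End WordLength.

Section ParabolicCosets.
Variables (gT : finGroupType) (S : {set gT}).
Local Open Scope group_scope.

Lemma in_Xset1 r w : (w \in Xset S [set r]) = (ell S w < ell S (r * w))%N.
Proof. by rewrite inE; apply/forall_inP/idP => [desc|lt_w r' /set1P-> //]; apply/desc/set11. Qed.

Lemma longest_notin_Xset1 r w : (forall v, ell S v <= ell S w)%N ->
  w \notin Xset S [set r].
Proof. by move=> w_longest; rewrite in_Xset1 -leqNgt w_longest. Qed.

Lemma XsetU J K : Xset S (J :|: K) = Xset S J :&: Xset S K.
Proof.
apply/setP => w; rewrite !inE; apply/forall_inP/andP => [desc|[]].
  by split; apply/forall_inP => r rJ; rewrite desc // inE rJ ?orbT.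
by move=> /forall_inP descJ /forall_inP descK r /setUP[/descJ|/descK].
Qed.

Lemma Xset0 : Xset S set0 = [set: gT].
Proof. by apply/setP => w; rewrite !inE; apply/forall_inP => r; rewrite inE. Qed.

Lemma Xsharp0 : Xsharp S set0 = [set: gT].
Proof. by apply/setP => w; rewrite inE Xset0 conj0g sub0set !inE. Qed.

Lemma sum_mcoef (R : pzRingType) (V : lmodType R) (K : {set gT}) (F : {set gT} -> V) :
  K \subset S ->
  (\sum_(L in powerset S) (mcoef S K L)%:R *: F L)%R =
  (\sum_(L in powerset K) #|Xset S K :&: Xsharp S L|%:R *: F L)%R.
Proof.
move=> sKS; rewrite (big_setID (powerset K)) /= (setIidPr _); last first.
  by apply/subsetP => L; rewrite !powersetE => /subset_trans->.
rewrite [X in (_ + X)%R]big1 ?addr0 => [|L]; last first.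
  by rewrite !inE /mcoef => /andP[/negPf->]; rewrite scale0r.
by apply: eq_bigr => L; rewrite powersetE /mcoef => ->.
Qed.

End ParabolicCosets.

Lemma order2_mulgg (gT : finGroupType) (x : gT) : #[x]%g = 2%N -> (x * x = 1)%g.
Proof. by move=> ox; rewrite -{2}(invg2id ox) mulgV. Qed.

Lemma order2_neq1 (gT : finGroupType) (x : gT) : #[x]%g = 2%N -> (x != 1)%g.
Proof. by move=> ox; rewrite -order_eq1 ox. Qed.

Section RankTwo.
Variables (gT : finGroupType) (s t : gT) (m : nat).
Hypotheses (s_order : #[s]%g = 2%N) (t_order : #[t]%g = 2%N)
  (st_order : #[(s * t)%g]%g = m) (m_ge2 : (2 <= m)%N)
  (st_gen : <<[set s; t]>>%g = [set: gT]).
Local Open Scope group_scope.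
Local Notation S := [set s; t].
Local Notation a := (s * t).
Local Notation A := <[s * t]>.

Lemma s_in_S : s \in S. Proof. by rewrite !inE eqxx. Qed.
Lemma t_in_S : t \in S. Proof. by rewrite !inE eqxx orbT. Qed.

Lemma mulss : s * s = 1. Proof. exact: order2_mulgg. Qed.

Lemma S_involutive : {in S, forall r, r * r = 1}.
Proof. by move=> r /set2P[]->; apply: order2_mulgg. Qed.

Lemma gen_neq1 r : r \in S -> r != 1.
Proof. by case/set2P=> ->; apply: order2_neq1. Qed.

Lemma s_neq_t : s != t.
Proof.
apply/eqP => eq_st; move: m_ge2.
by rewrite -st_order eq_st order2_mulgg // order1.
Qed.

Lemma invg_s : s^-1 = s. Proof. exact: (invg_gen S_involutive s_in_S). Qed.
Lemma invg_t : t^-1 = t. Proof. exact: (invg_gen S_involutive t_in_S). Qed.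

Lemma conj_cycle_s x : x \in A -> x ^ s = x^-1.
Proof.
case/cycleP=> i ->; rewrite conjXg -expgVn; congr (_ ^+ _).
by rewrite conjgE invg_s !mulgA mulss mul1g invMg invg_s invg_t.
Qed.

Lemma mulg_s_cycle x : x \in A -> s * x = x^-1 * s.
Proof. by move=> xA; rewrite conjgCV invg_s conj_cycle_s. Qed.

Lemma s_notin_cycle : s \notin A.
Proof.
apply/negP => sA.
have tA : t \in A by rewrite -[X in X \in _](mulKg s) groupM ?groupV ?cycle_id.
have : s \in <[t]>.
  suff /eqP <- : <[s]> == <[t]> :> {set gT} by apply: cycle_id.
  by rewrite (eq_subG_cyclic (cycle_cyclic a)) ?cycle_subG // -!orderE s_order t_order.
case/cycleP=> i; rewrite -expg_mod_order t_order modn2.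
case: (odd i) => /= /eqP; rewrite ?expg1 ?expg0; apply/negP.
  exact: s_neq_t.
exact: gen_neq1 s_in_S.
Qed.

Lemma gen_notin_cycle r : r \in S -> r \notin A.
Proof.
case/set2P=> ->; first exact: s_notin_cycle.
apply: contra s_notin_cycle => tA.
by rewrite -[X in X \in _](mulgK t) groupM ?groupV ?cycle_id.
Qed.

Lemma invg_st : a^-1 = t * s. Proof. by rewrite invMg invg_s invg_t. Qed.

Lemma mulg_t y : y * t = y * s * a.
Proof. by rewrite -mulgA (mulgA s) mulss mul1g. Qed.

Lemma cycle_or_coset x : (x \in A) || (x * s \in A).
Proof.
have step y r : r \in S -> (y \in A) || (y * s \in A) -> (y * r \in A) || (y * r * s \in A).
  case/set2P=> -> /orP[yA|ysA]; rewrite ?ysA //.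
  - by rewrite -mulgA mulss mulg1 yA orbT.
  - by apply/orP; right; rewrite -mulgA -invg_st groupM ?groupV ?cycle_id.
  - by rewrite [y * t]mulg_t groupM ?cycle_id.
have: x \in <<S>> by rewrite st_gen inE.
case/gen_prodgP => n [c cS ->]; elim: n c cS => [|n IHn] c cS.
  by rewrite big_ord0 group1.
by rewrite big_ord_recr /=; apply: step (cS ord_max) (IHn _ _).
Qed.

Lemma mem_cycle_mulr r y : r \in S -> (y * r \in A) = (y \notin A).
Proof.
move=> rS; have [yA|yNA] := boolP (y \in A).
  by apply: contraNF (gen_notin_cycle rS) => yrA; rewrite -(mulKg y r) groupM ?groupV.
have ysA : y * s \in A by have := cycle_or_coset y; rewrite (negPf yNA).
by case/set2P: rS => -> //; rewrite [y * t]mulg_t groupM ?cycle_id.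
Qed.

Lemma mem_cycle_mull r y : r \in S -> (r * y \in A) = (y \notin A).
Proof.
move=> rS; rewrite -groupV invMg (invg_gen S_involutive rS).
by rewrite mem_cycle_mulr // groupV.
Qed.

Lemma mem_cycle_words n x : x \in words S n -> (x \in A) = ~~ odd n.
Proof.
elim: n x => [|n IHn] x; first by rewrite words0 => /eqP->; rewrite group1.
by case/wordsSP=> y /IHn yA [r rS ->]; rewrite mem_cycle_mulr // yA /= negbK.
Qed.

Lemma coset_cycleE : A :* s = ~: A.
Proof. by apply/setP => x; rewrite inE mem_rcoset invg_s mem_cycle_mulr ?s_in_S. Qed.

Lemma card_dihedral : #|gT| = m.*2.
Proof. by rewrite -(cardsC A) -coset_cycleE card_rcoset -orderE st_order addnn. Qed.

Lemma cycle_ordP y : y \in A -> exists k : 'I_m, y = a ^+ k.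
Proof.
case/cycleP => i ->; have m_gt0 : (0 < m)%N by case: m m_ge2.
by exists (Ordinal (ltn_pmod i m_gt0)); rewrite /= -st_order expg_mod_order.
Qed.

Lemma pow_st_words k : a ^+ k \in words S k.*2.
Proof.
elim: k => [|k IHk]; first by rewrite expg0 words0.
by rewrite expgSr doubleS mulgA !words_mulr ?s_in_S ?t_in_S.
Qed.

Lemma words_cover w : exists2 n, (n < #|gT|)%N & w \in words S n.
Proof.
rewrite card_dihedral; case/orP: (cycle_or_coset w) => /cycle_ordP[k wk].
  by exists k.*2; rewrite ?ltn_double ?wk ?pow_st_words.
exists k.*2.+1; first by rewrite ltn_Sdouble.
by rewrite -[w](mulgK s) wk invg_s words_mulr ?pow_st_words ?s_in_S.
Qed.

Lemma ell_mulS r w : r \in S ->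
  ell S (r * w) = (ell S w).+1 \/ ell S w = (ell S (r * w)).+1.
Proof.
move=> rS; have ub := ell_mull words_cover w rS.
have lb := ell_mull words_cover (r * w) rS.
rewrite mulgA S_involutive // mul1g in lb.
have parity : ell S (r * w) != ell S w.
  apply/eqP => eq_ell; have := mem_cycle_mull w rS.
  rewrite (mem_cycle_words (words_ell words_cover (r * w))).
  by rewrite (mem_cycle_words (words_ell words_cover w)) eq_ell; case: odd.
lia.
Qed.

Lemma Xset1_mull r w : r \in S ->
  (r * w \in Xset S [set r]) = (w \notin Xset S [set r]).
Proof.
move=> rS; rewrite !in_Xset1 mulgA S_involutive // mul1g.
by case: (ell_mulS w rS) => ->; rewrite ltnSn ?ltnn // ltnNge leqnSn.
Qed.

Lemma card_Xset1_half (T : {set gT}) r : r \in S -> {in T, forall x, r * x \in T} ->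
  (#|T :&: Xset S [set r]| * 2 = #|T|)%N.
Proof.
move=> rS rT.
have descents : T :\: Xset S [set r] = [set r * x | x in T :&: Xset S [set r]].
  apply/setP => y; rewrite inE; apply/andP/imsetP => [[yNX yT]|[x /setIP[xT xX] ->]].
    exists (r * y); last by rewrite mulgA S_involutive ?mul1g.
    by rewrite inE rT ?Xset1_mull.
  by rewrite Xset1_mull ?xX ?rT.
rewrite -(cardsID (Xset S [set r]) T) descents card_imset; last exact: mulgI.
by rewrite muln2 addnn.
Qed.

Lemma card_Xset1 r : r \in S -> (#|Xset S [set r]| * 2 = #|gT|)%N.
Proof.
move=> rS; rewrite -cardsT -(setTI (Xset _ _)) card_Xset1_half // => x _.
by rewrite inE.
Qed.

Lemma one_in_Xset (L : {set gT}) : L \subset S -> 1 \in Xset S L.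
Proof.
move=> sLS; rewrite inE; apply/forall_inP => r /(subsetP sLS) rS.
have /eqP-> : ell S 1 == 0%N by rewrite (ell_eq0 words_cover).
by rewrite mulg1 lt0n (ell_eq0 words_cover) gen_neq1.
Qed.

Lemma one_in_Xsharp (L : {set gT}) : L \subset S -> 1 \in Xsharp S L.
Proof. by move=> sLS; rewrite inE one_in_Xset // conjsg1. Qed.

Lemma Xset1_sI_t : Xset S [set s] :&: Xset S [set t] = [set 1].
Proof.
apply/setP => w; rewrite inE in_set1; apply/andP/eqP => [[sw tw]|->]; last first.
  by split; apply: one_in_Xset; rewrite sub1set ?s_in_S ?t_in_S.
apply/eqP/negPn/negP => /(ell_descent S_involutive words_cover)[r].
case/set2P=> -> lt; [move: sw | move: tw].
  by rewrite in_Xset1 ltnNge (ltnW lt).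
by rewrite in_Xset1 ltnNge (ltnW lt).
Qed.

Lemma XsetS : Xset S S = [set 1].
Proof. by rewrite XsetU Xset1_sI_t. Qed.

Lemma conj_s_cycle x : x \in A -> s ^ x = x^-1 * x^-1 * s.
Proof. by move=> xA; rewrite conjgE -mulgA mulg_s_cycle // mulgA. Qed.

Lemma conj_s_coset x : x \in A -> s ^ (x * s) = x * x * s.
Proof.
move=> xA; rewrite conjgE invMg invg_s mulg_s_cycle ?groupV // invgK.
by rewrite !mulgA -(mulgA x s s) mulss mulg1.
Qed.

Lemma pow_st_eq1 n : (a ^+ n == 1) = (m %| n).
Proof. by rewrite -order_dvdn st_order. Qed.

Lemma conj_s_pow_in_S k : (s ^ (a ^+ k) \in S) = (m %| k.*2) || (k.*2 == 1 %[mod m]).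
Proof.
rewrite conj_s_cycle ?mem_cycle // !inE !(canF_eq (mulgK s)) invg_s.
rewrite mulss -invg_st -invMg -expgD addnn invg_eq1 (inj_eq invg_inj).
by rewrite pow_st_eq1 -{2}[a]expg1 eq_expg_mod_order st_order.
Qed.

Lemma conj_s_pow_s_in_S k : (s ^ (a ^+ k * s) \in S) = (m %| k.*2) || (m %| k.*2.+1).
Proof.
rewrite conj_s_coset ?mem_cycle // !inE !(canF_eq (mulgK s)) invg_s.
rewrite mulss -invg_st -expgD addnn pow_st_eq1.
by rewrite eq_mulgV1 invgK -expgSr pow_st_eq1.
Qed.

Lemma pow_st_inj : injective (fun k : 'I_m => a ^+ k).
Proof.
move=> i j /eqP; rewrite eq_expg_mod_order st_order !modn_small //.
by move/eqP/val_inj.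
Qed.

Lemma card_conj_s_cycle_in_S : #|[set x in A | s ^ x \in S]| = 2%N.
Proof.
rewrite -(card_double_mod_0_1 m_ge2) -(card_imset _ pow_st_inj).
apply: eq_card => y; rewrite in_set; apply/andP/imsetP => [[/cycle_ordP[k ->]]|[k]].
  by rewrite conj_s_pow_in_S => Pk; exists k; rewrite ?inE.
by rewrite inE -conj_s_pow_in_S => Pk ->; rewrite mem_cycle.
Qed.

Lemma card_conj_s_coset_in_S : #|[set x in ~: A | s ^ x \in S]| = 2%N.
Proof.
rewrite -(card_dvdn_double_or_doubleS m_ge2) -(card_imset _ (inj_comp (mulIg s) pow_st_inj)).
apply: eq_card => y; rewrite -coset_cycleE in_set mem_rcoset invg_s.
apply/andP/imsetP => [[/cycle_ordP[k yk]]|[k]].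
  by rewrite -[y](mulgK s) yk invg_s conj_s_pow_s_in_S => Pk; exists k; rewrite ?inE.
by rewrite inE -conj_s_pow_s_in_S => Pk ->; rewrite -mulgA mulss mulg1 mem_cycle.
Qed.

Lemma card_conj_s_in_S : #|[set x | s ^ x \in S]| = 4%N.
Proof.
rewrite -(cardsID A) setIC -setIdE setDE setIC -setIdE.
by rewrite card_conj_s_cycle_in_S card_conj_s_coset_in_S.
Qed.

Lemma card_Xset1_Xsharp1_s : #|Xset S [set s] :&: Xsharp S [set s]| = 2%N.
Proof.
have sharpE : Xset S [set s] :&: Xsharp S [set s] = [set x | s ^ x \in S] :&: Xset S [set s].
  apply/setP => w; rewrite !in_setI [w \in Xsharp _ _]inE conjg_set1 sub1set.
  by rewrite andbA andbb andbC [in RHS]in_set.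
have closed : {in [set x | s ^ x \in S], forall x, s * x \in [set x | s ^ x \in S]}.
  by move=> x; rewrite !inE conjgM (conjgE s s) mulKg.
have := card_Xset1_half s_in_S closed; rewrite card_conj_s_in_S -sharpE.
lia.
Qed.

Section LongestElement.
Variable w0 : gT.
Hypothesis w0_longest : forall w, (ell S w <= ell S w0)%N.

Lemma Xset1_sU_t : Xset S [set s] :|: Xset S [set t] = [set~ w0].
Proof.
apply/eqP; rewrite eqEcard; apply/andP; split.
  apply/subsetP => w; rewrite in_setU in_setC1; apply: contraL => /eqP->.
  by rewrite negb_or !longest_notin_Xset1.
have := cardsUI (Xset S [set s]) (Xset S [set t]).
rewrite Xset1_sI_t cards1 cardsC1 -subn1.
have := card_Xset1 s_in_S; have := card_Xset1 t_in_S.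
move: #|gT| #|Xset S [set s]| #|Xset S [set t]| #|_ :|: _|; lia.
Qed.

Lemma longest_invg : w0^-1 = w0.
Proof.
have longest_inv : forall v, (ell S v <= ell S w0^-1)%N.
  by move=> v; rewrite (ell_invg S_involutive words_cover).
have : w0^-1 \notin Xset S [set s] :|: Xset S [set t].
  by rewrite in_setU negb_or !longest_notin_Xset1.
by rewrite Xset1_sU_t in_setC1 negbK => /eqP.
Qed.

Lemma longest_neq1 : w0 != 1.
Proof.
rewrite -(ell_eq0 words_cover) -lt0n; apply: leq_trans (w0_longest s).
by rewrite lt0n (ell_eq0 words_cover) gen_neq1 ?s_in_S.
Qed.

Lemma order_longest : #[w0] = 2%N.
Proof.
have dvd_2 : (#[w0] %| 2)%N by rewrite order_dvdn expgS expg1 -{1}longest_invg mulVg.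
have := dvdn_leq (isT : 0 < 2)%N dvd_2; have := order_gt0 w0.
have : #[w0] != 1%N by rewrite order_eq1 longest_neq1.
lia.
Qed.

Lemma Xset1_indicators w :
  ((w \in Xset S [set s]) + (w \in Xset S [set t]) = (w != w0) + (w == 1%g))%N.
Proof.
rewrite -in_setC1 -Xset1_sU_t -in_set1 -Xset1_sI_t in_setU in_setI.
by case: (w \in Xset S [set s]); case: (w \in Xset S [set t]).
Qed.

End LongestElement.
End RankTwo.

Section GroupAlgebra.
Variable gT : finGroupType.
Local Open Scope ring_scope.

Lemma sum_delta_mul (a : gT) (F : gT -> algC) : \sum_x (x == a)%:R * F x = F a.
Proof.
rewrite (bigD1 a) //= eqxx mul1r big1 ?addr0 // => x /negPf->.
by rewrite mul0r.
Qed.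

Lemma gdeltaE (g z : gT) : gdelta g z = (z == g)%:R.
Proof. by rewrite ffunE; case: (z == g). Qed.

Lemma gmul_gdelta (v : CW gT) (g : gT) : gmul v (gdelta g) = [ffun z => v (z * g^-1)%g].
Proof.
apply/ffunP => z; rewrite !ffunE -(sum_delta_mul (z * g^-1)%g v).
apply: eq_bigr => x _; rewrite gdeltaE mulrC; congr ((nat_of_bool _)%:R * _).
by apply/eqP/eqP => [<-|->]; rewrite invMg invgK ?mulKVg ?mulgKV.
Qed.

Lemma gmul_sumr (I : finType) (c : I -> algC) (v : I -> CW gT) (u : CW gT) :
  gmul u (\sum_i c i *: v i) = \sum_i c i *: gmul u (v i).
Proof.
apply/ffunP => z; rewrite ffunE !sum_ffunE.
under eq_bigr => x _ do rewrite sum_ffunE mulr_sumr.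
rewrite exchange_big; apply: eq_bigr => i _.
by rewrite !ffunE scaler_sumr; apply: eq_bigr => x _; rewrite !ffunE scalerAr.
Qed.

Lemma gmul_suml (I : finType) (c : I -> algC) (v : I -> CW gT) (u : CW gT) :
  gmul (\sum_i c i *: v i) u = \sum_i c i *: gmul (v i) u.
Proof.
apply/ffunP => z; rewrite ffunE !sum_ffunE.
under eq_bigr => x _ do rewrite sum_ffunE mulr_suml.
rewrite exchange_big; apply: eq_bigr => i _.
by rewrite !ffunE scaler_sumr; apply: eq_bigr => x _; rewrite !ffunE scalerAl.
Qed.

Lemma CW_expand (v : CW gT) : v = \sum_h v h *: gdelta h.
Proof.
apply/ffunP => z; rewrite sum_ffunE -(sum_delta_mul z v).
by apply: eq_bigr => h _; rewrite [RHS]ffunE gdeltaE eq_sym mulrC.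
Qed.

Lemma gmulA_gdelta (u v : CW gT) g :
  gmul u (gmul v (gdelta g)) = gmul (gmul u v) (gdelta g).
Proof.
rewrite !gmul_gdelta; apply/ffunP => z; rewrite !ffunE.
by apply: eq_bigr => x _; rewrite ffunE mulgA.
Qed.

Lemma gmul_gdeltas (h g : gT) : gmul (gdelta h) (gdelta g) = gdelta (h * g)%g.
Proof.
rewrite gmul_gdelta; apply/ffunP => z; rewrite !ffunE.
by congr (if _ then _ else _); apply/eqP/eqP => [<-|->]; rewrite ?mulgKV ?mulgK.
Qed.

Lemma xsumE (S K : {set gT}) (z : gT) :
  xsum S K z = ((z^-1)%g \in Xset S K)%:R.
Proof.
rewrite sum_ffunE; have [zVX|zVNX] := boolP ((z^-1)%g \in Xset S K).
  rewrite (bigD1 (z^-1)%g) //= gdeltaE invgK eqxx big1 ?addr0 // => x /andP[_ neq_x].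
  by rewrite gdeltaE -(inj_eq invg_inj) invgK eq_sym (negPf neq_x).
rewrite big1 // => x xX; rewrite gdeltaE -(inj_eq invg_inj) invgK.
by have [zVx|//] := eqP; move: zVNX; rewrite zVx xX.
Qed.

Section RightIdeal.
Variable E : CW gT.
Hypothesis E_idem : gmul E E = E.

Lemma mem_rideal v : gmul E v \in rideal E.
Proof.
rewrite (CW_expand v) gmul_sumr; apply: memv_suml => h _; apply: memvZ.
by apply: memv_span; apply/mapP; exists h; rewrite ?mem_enum.
Qed.

Lemma rideal_fixed v : v \in rideal E -> gmul E v = v.
Proof.
move=> vU; rewrite (coord_span vU) gmul_sumr; apply: eq_bigr => i _; congr (_ *: _).
have : [seq gmul E (gdelta g) | g : gT]`_i \in [seq gmul E (gdelta g) | g : gT].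
  by rewrite mem_nth // size_map -cardE.
by case/mapP => h _ ->; rewrite gmulA_gdelta E_idem.
Qed.

Lemma gmul_rideal_gdelta v g : v \in rideal E ->
  gmul v (gdelta g) = \sum_h v h *: gmul E (gdelta (h * g)%g).
Proof.
move=> vU; rewrite -{1}(rideal_fixed vU) -gmulA_gdelta -gmul_sumr.
by congr (gmul E _); rewrite {1}(CW_expand v) gmul_suml; under eq_bigr do rewrite gmul_gdeltas.
Qed.

Lemma rchar_idem g : rchar (rideal E) g = \sum_h E (h * g^-1 * h^-1)%g.
Proof.
rewrite /rchar; set B := vbasis (rideal E).
under eq_bigr => i _ do rewrite gmul_rideal_gdelta ?vbasis_mem ?mem_nth ?size_tuple // linear_sum.
rewrite exchange_big; apply: eq_bigr => h _.
have -> : E (h * g^-1 * h^-1)%g = gmul E (gdelta (h * g)%g) h.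
  by rewrite gmul_gdelta ffunE invMg mulgA.
rewrite {2}(coord_vbasis (mem_rideal (gdelta (h * g)%g))) sum_ffunE.
by apply: eq_bigr => i _; rewrite linearZ /= ffunE mulrC.
Qed.

End RightIdeal.
End GroupAlgebra.

Section LongestIdempotent.
Variables (gT : finGroupType) (w0 : gT) (E : CW gT).
Local Open Scope ring_scope.
Hypothesis w0_order : #[w0]%g = 2%N.
Hypothesis E_def : forall z, E z = ((z == 1%g)%:R + (z == w0)%:R) / 2 - (#|gT|%:R)^-1.

Lemma w0_invg : (w0^-1 = w0)%g. Proof. exact: invg2id. Qed.

Lemma natr_card_neq0 : (#|gT|%:R : algC) != 0.
Proof. by rewrite pnatr_eq0 -lt0n; apply/card_gt0P; exists 1%g. Qed.

Lemma sum_E_mul (F : gT -> algC) :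
  \sum_x E x * F x = F 1%g / 2 + F w0 / 2 - (#|gT|%:R)^-1 * \sum_x F x.
Proof.
rewrite mulr_sumr -(sum_delta_mul 1%g (fun x => F x / 2)) -(sum_delta_mul w0 (fun x => F x / 2)).
by rewrite -big_split -sumrB; apply: eq_bigr => x _; rewrite E_def /=; ring.
Qed.

Lemma sum_E : \sum_x E x = 0.
Proof.
under eq_bigr => x _ do rewrite -[E x]mulr1.
by rewrite sum_E_mul sumr_const -mulr_natr mul1r mulVf ?natr_card_neq0 //; field.
Qed.

Lemma E_idem : gmul E E = E.
Proof.
apply/ffunP => z; rewrite ffunE sum_E_mul.
have -> : \sum_x E (x^-1 * z)%g = 0.
  rewrite (reindex_inj (inj_comp (mulgI z) (@invg_inj gT))) /=.
  by under eq_bigr => x _ do rewrite invMg invgK mulgKV; rewrite sum_E.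
have -> : E (w0^-1 * z)%g = E z.
  by rewrite w0_invg !E_def !(canF_eq (mulKg w0)) mulg1 mulVg w0_invg (addrC (_ == w0)%:R).
by rewrite mulr0 subr0 invg1 mul1g; field.
Qed.

Lemma sum_E_conj (g : gT) : \sum_h E (h * g^-1 * h^-1)%g =
  ('Ind[[set: gT]] (1 : 'CF(<[w0]>%G)) - 1 : 'CF([set: gT])) g.
Proof.
rewrite !cfunE cfIndE ?subsetT // cfun1E inE /= -orderE w0_order.
rewrite (reindex_inj invg_inj) /=.
under eq_bigr => h _ do rewrite invgK -mulgA -conjgE conjVg E_def invg_eq1.
under eq_bigr => h _ do rewrite -[in X in (_ + X%:R)](inj_eq invg_inj) invgK w0_invg.
under [in RHS]eq_bigl => y do rewrite in_setT.
under [in RHS]eq_bigr => y _ do rewrite cfun1E /= cycle2g // !inE.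
rewrite sumrB sumr_const -(mulr_natr (#|gT|%:R)^-1) mulVf ?natr_card_neq0 // -mulr_suml mulrC.
congr (_ * _ - _); apply: eq_bigr => y _.
have [->|_] := eqP; last by rewrite add0r.
by rewrite eq_sym -order_eq1 w0_order addr0.
Qed.

End LongestIdempotent.

Section RankTwoIdempotents.
Variables (gT : finGroupType) (s t : gT) (m : nat) (w0 : gT) (e : {set gT} -> CW gT).
Local Open Scope ring_scope.
Local Notation S := [set s; t].
Hypotheses (s_order : #[s]%g = 2%N) (t_order : #[t]%g = 2%N)
  (st_order : #[(s * t)%g]%g = m) (m_ge2 : (2 <= m)%N)
  (st_gen : <<S>>%g = [set: gT])
  (w0_longest : forall w : gT, (ell S w <= ell S w0)%N)
  (e_def : forall K : {set gT}, K \subset S ->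
     xsum S K = \sum_(L in powerset S) (mcoef S K L)%:R *: e L).

Lemma card_Xset1_Xsharp1 r : r \in S -> #|Xset S [set r] :&: Xsharp S [set r]| = 2%N.
Proof.
(* The case r = t is the case r = s for the generating pair (t, s). *)
case/set2P=> ->; first exact: card_Xset1_Xsharp1_s s_order t_order st_order m_ge2 st_gen.
have ts_order : #[(t * s)%g]%g = m.
  by rewrite -st_order -(orderV (s * t)) invMg (invg2id s_order) (invg2id t_order).
by rewrite setUC; apply: card_Xset1_Xsharp1_s t_order s_order ts_order m_ge2 _; rewrite setUC.
Qed.

Lemma xsum_eq (K : {set gT}) (z : gT) : K \subset S ->
  ((z^-1)%g \in Xset S K)%:R = \sum_(L in powerset K) #|Xset S K :&: Xsharp S L|%:R * e L z.
Proof.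
move=> sKS; rewrite -xsumE e_def // (sum_mcoef e sKS) sum_ffunE.
by apply: eq_bigr => L _; rewrite ffunE.
Qed.

Lemma e0E z : e set0 z = #|gT|%:R^-1.
Proof.
have := xsum_eq z (sub0set S); rewrite Xset0 in_setT powerset0 big_set1 Xsharp0 setIT cardsT.
by move/(canLR (mulKf (natr_card_neq0 gT))) <-; rewrite mulr1.
Qed.

Lemma e1E r z : r \in S -> e [set r] z = (((z^-1)%g \in Xset S [set r])%:R - 2^-1) / 2.
Proof.
move=> rS; have := xsum_eq z (_ : [set r] \subset S); rewrite sub1set rS => /(_ isT).
rewrite powerset1 big_setU1 ?big_set1 /=; last by rewrite in_set1 eq_sym -cards_eq0 cards1.
rewrite Xsharp0 setIT card_Xset1_Xsharp1 // e0E => ->.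
have /(congr1 (fun n => n%:R : algC)) := card_Xset1 s_order t_order st_order m_ge2 st_gen rS.
rewrite natrM => /(canRL (mulfK _)) ->; last by rewrite pnatr_eq0.
by field; rewrite natr_card_neq0.
Qed.

Lemma eSE z : e S z = ((z == 1%g)%:R + (z == w0)%:R) / 2 - #|gT|%:R^-1.
Proof.
have := xsum_eq z (subxx S).
rewrite (XsetS s_order t_order st_order m_ge2 st_gen) in_set1 invg_eq1.
rewrite big_powerset2 ?(s_neq_t t_order st_order m_ge2) //.
have one_Xsharp := one_in_Xsharp s_order t_order st_order m_ge2 st_gen.
rewrite !(setIidPl _) ?cards1 ?sub1set ?one_Xsharp ?sub0set ?sub1set ?s_in_S ?t_in_S //.
rewrite !mul1r.
move/esym/(canRL (addKr _)) ->.
rewrite e0E !e1E ?s_in_S ?t_in_S //.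
have := Xset1_indicators s_order t_order st_order m_ge2 st_gen w0_longest (z^-1)%g.
rewrite (canF_eq (@invgK _)) (longest_invg s_order t_order st_order m_ge2 st_gen w0_longest).
move/(congr1 (fun n => n%:R : algC)); rewrite !natrD invg_eq1 => /(canRL (addrK _)) ->.
have -> : (z != w0)%:R = 1 - (z == w0)%:R :> algC by case: (z == w0); rewrite ?subr0 ?subrr.
by field; rewrite natr_card_neq0.
Qed.

End RankTwoIdempotents.

Theorem corollary5p5 (gT : finGroupType) (s t : gT) (m : nat) (w0 : gT)
  (e : {set gT} -> CW gT) :
  #[s]%g = 2%N -> #[t]%g = 2%N -> #[(s * t)%g]%g = m -> (2 <= m)%N ->
  <<[set s; t]>>%g = [set: gT] ->
  (forall w : gT, (ell [set s; t] w <= ell [set s; t] w0)%N) ->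
  (forall K : {set gT}, K \subset [set s; t] ->
     xsum [set s; t] K =
       (\sum_(L in powerset [set s; t]) (mcoef [set s; t] K L)%:R *: e L)%R) ->
  forall g : gT,
    rchar (rideal (e [set s; t])) g =
      (('Ind[[set: gT]] (1 : 'CF(<[w0]>%G)) - 1)%R : 'CF([set: gT])) g.
Proof.
move=> s_order t_order st_order m_ge2 st_gen w0_longest e_def g.
have w0_order := order_longest s_order t_order st_order m_ge2 st_gen w0_longest.
have eS_def := eSE s_order t_order st_order m_ge2 st_gen w0_longest e_def.
by rewrite (rchar_idem (E_idem w0_order eS_def)) (sum_E_conj w0_order eS_def).
Qed.
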